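(* Let $(X,\|\cdot\|_X)$ be a Banach space and $\mathcal{K}\subset X$ compact. (i) If for some constants $c_1>0$, $\alpha>0$, $\beta\in\mathbb{R}$ we have $\varepsilon_n(\mathcal{K})_X>c_1\frac{(\log_2n)^\beta}{n^\alpha}$ for all $n\ge2$, then for each $\gamma>0$ there exists $C>0$ such that $d_n^\gamma(\mathcal{K})_X\ge C\frac{(\log_2n)^{\beta-\alpha}}{n^\alpha}$ for all $n\ge2$. (ii) If for some constants $c_1>0$, $\alpha>0$ we have $\varepsilon_n(\mathcal{K})_X>c_1(\log_2n)^{-\alpha}$ for all $n\ge2$, then for each $\gamma>0$ there exists $C>0$ such that $d_n^\gamma(\mathcal{K})_X\ge C(\log_2n)^{-\alpha}$ for all $n\ge2$. (iii) If for some constants $c_1,c>0$ and $0<\alpha<1$ we have $\varepsilon_n(\mathcal{K})_X>c_12^{-cn^\alpha}$ for $n=1,2,\dots$, then for each $\gamma\ge2\,\mathrm{rad}(\mathcal{K})$ there exist constants $C,c_2>0$ such that $d_n^\gamma(\mathcal{K})_X\ge C2^{-c_2n^{\alpha/(1-\alpha)}}$ for $n=1,2,\dots$.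
   Context: $\mathrm{rad}(\mathcal{K})=\inf_{g\in X}\sup_{f\in\mathcal{K}}\|f-g\|_X$. For $m\ge0$, the entropy number $\varepsilon_m(\mathcal{K})_X$ is the infimum of all $\varepsilon>0$ such that $\mathcal{K}$ is covered by $2^m$ closed balls of radius $\varepsilon$ with centers in $X$. For $k\ge1$ and a norm $\|\cdot\|_{Y_k}$ on $\mathbb{R}^k$ let $B_{Y_k}=\{y\in\mathbb{R}^k:\|y\|_{Y_k}\le1\}$. For $\gamma\ge0$, the fixed Lipschitz width is $d^\gamma(\mathcal{K},Y_k)_X=\inf_{\Phi}\sup_{f\in\mathcal{K}}\inf_{y\in B_{Y_k}}\|f-\Phi(y)\|_X$, the infimum over all maps $\Phi:B_{Y_k}\to X$ with $\|\Phi(y)-\Phi(y')\|_X\le\gamma\|y-y'\|_{Y_k}$ for all $y,y'\in B_{Y_k}$. The Lipschitz width is $d_n^\gamma(\mathcal{K})_X=\inf_{1\le k\le n}\inf_{\|\cdot\|_{Y_k}}d^\gamma(\mathcal{K},Y_k)_X$, the inner infimum over all norms on $\mathbb{R}^k$. *)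

From HB Require Import structures.
From mathcomp Require Import all_boot all_order all_algebra.
From mathcomp Require Import all_classical all_reals all_analysis.
Set Implicit Arguments. Unset Strict Implicit. Unset Printing Implicit Defensive.
Import Order.TTheory GRing.Theory Num.Theory.
Import numFieldNormedType.Exports.
Local Open Scope classical_set_scope.
Local Open Scope ring_scope.

Definition is_norm (R : realType) (k : nat) (N : 'rV[R]_k -> R) : Prop :=
  [/\ (forall x, 0 <= N x),
      (forall x, N x = 0 -> x = 0),
      (forall (a : R) x, N (a *: x) = `|a| * N x) &
      (forall x y, N (x + y) <= N x + N y)].

Definition unit_ball (R : realType) (k : nat) (N : 'rV[R]_k -> R) : set 'rV[R]_k :=
  [set y | N y <= 1].

Definition cball (R : realType) (X : normedModType R) (c : X) (e : R) : set X :=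
  [set x | `|x - c| <= e].

Definition cheb_rad (R : realType) (X : normedModType R) (K : set X) : \bar R :=
  ereal_inf [set ereal_sup [set (`|f - g|)%:E | f in K] | g in [set: X]].

Definition entropy_number (R : realType) (X : normedModType R) (K : set X)
    (m : nat) : \bar R :=
  ereal_inf [set e%:E | e in [set e : R | 0 < e /\
     exists c : 'I_(2 ^ m) -> X, K `<=` \bigcup_(i in [set: 'I_(2 ^ m)]) cball (c i) e]].

Definition fixed_lip_width (R : realType) (X : normedModType R) (K : set X)
    (gamma : R) (k : nat) (N : 'rV[R]_k -> R) : \bar R :=
  ereal_inf [set ereal_sup [set ereal_inf [set (`|f - Phi y|)%:E | y in unit_ball N]
                             | f in K]
            | Phi in [set Phi : 'rV[R]_k -> X | forall y y',
                 unit_ball N y -> unit_ball N y' ->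
                 `|Phi y - Phi y'| <= gamma * N (y - y')]].

Definition lip_width (R : realType) (X : normedModType R) (K : set X)
    (gamma : R) (n : nat) : \bar R :=
  ereal_inf [set d | exists (k : nat) (N : 'rV[R]_k -> R),
     [/\ (1 <= k <= n)%N, is_norm N & d = fixed_lip_width K gamma N]].

Definition log2 (R : realType) (x : R) : R := ln x / ln 2.

From HB Require Import structures.
From mathcomp Require Import all_boot all_order all_algebra.
From mathcomp Require Import all_classical all_reals all_analysis.
From mathcomp Require Import ring lra zify perm.
Import Order.TTheory GRing.Theory Num.Theory.
Import numFieldNormedType.Exports.
Local Open Scope classical_set_scope.
Local Open Scope ring_scope.
Set Implicit Arguments. Unset Strict Implicit. Unset Printing Implicit Defensive.

(* In a basis of unit vectors of nearly maximal determinant, Cramer's rule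
   bounds every coordinate of every point of the unit ball of a norm on R^k by 2.
   Cutting each coordinate range into 2^s intervals partitions the ball into
   2^(ks) cells of norm-diameter at most 4k 2^-s, whose images under a
   gamma-Lipschitz map Phi are 2^(ks) balls covering Phi(ball).  Hence, for
   k <= n,
     eps_(ns)(K) <= d_n^gamma(K) + 4 n |gamma| 2^-s.
   Each part follows by choosing s as a function of n so that the error term is
   at most half of the assumed lower bound for eps_(ns): s ~ p log2 n + A in (i),
   of which (ii) is the case alpha = 0, and s ~ B n^(alpha/(1-alpha)) in (iii). *)

Section RowNorm.
Variables (R : realType) (k : nat) (N : 'rV[R]_k -> R).
Hypothesis hN : is_norm N.

Lemma is_norm_ge0 y : 0 <= N y. Proof. by case: hN. Qed.
Lemma is_norm_eq0 y : N y = 0 -> y = 0. Proof. by case: hN => _ + _ _; apply. Qed.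
Lemma is_normZ a y : N (a *: y) = `|a| * N y. Proof. by case: hN => _ _ + _; apply. Qed.
Lemma is_normD y z : N (y + z) <= N y + N z. Proof. by case: hN => _ _ _; apply. Qed.

Lemma is_norm0 : N 0 = 0.
Proof. by rewrite -(scale0r (0 : 'rV[R]_k)) is_normZ normr0 mul0r. Qed.

Lemma is_normN y : N (- y) = N y.
Proof. by rewrite -scaleN1r is_normZ normrN normr1 mul1r. Qed.

Lemma is_norm_lerB_dist y z : N y - N z <= N (y - z).
Proof. by rewrite lerBlDl -{1}(subrK z y) addrC is_normD. Qed.

Lemma is_norm_sum (I : Type) (r : seq I) (P : pred I) (F : I -> 'rV[R]_k) :
  N (\sum_(i <- r | P i) F i) <= \sum_(i <- r | P i) N (F i).
Proof.
elim/big_rec2: _ => [|i y1 y2 _ IH]; first by rewrite is_norm0.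
by rewrite (le_trans (is_normD _ _)) // lerD2l.
Qed.

Definition basis_norm := \sum_(j < k) N 'e_j.

Lemma basis_norm_ge0 : 0 <= basis_norm.
Proof. by apply: sumr_ge0 => j _; apply: is_norm_ge0. Qed.

Lemma mx_norm_entry_le (y : 'rV[R]_k) j : `|y 0 j| <= `|y|.
Proof.
rewrite [leRHS]/Num.norm /= mx_normrE; apply/bigmax_geP; right => /=.
by exists (0, j).
Qed.

Lemma is_norm_le_mx_norm y : N y <= basis_norm * `|y|.
Proof.
rewrite {1}(row_sum_delta y) (le_trans (is_norm_sum _ _ _)) // mulr_suml.
apply: ler_sum => j _.
by rewrite is_normZ mulrC ler_wpM2l ?is_norm_ge0 ?mx_norm_entry_le.
Qed.

Lemma is_norm_continuous : continuous N.
Proof.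
move=> x; apply/(@cvgrPdist_lt _ _ _ _ (nbhs_filter x)) => e e0.
have C0 : 0 < basis_norm + 1 by rewrite ltr_wpDl ?basis_norm_ge0.
near=> y.
have xy : `|x - y| < e / (basis_norm + 1).
  by near: y; apply: (@cvgr_dist_lt _ _ _ (nbhs x)); [exact: cvg_id | exact: divr_gt0].
rewrite ltr_pdivlMr // mulrC in xy.
have := is_norm_lerB_dist x y; have := is_norm_lerB_dist y x.
rewrite -[y - x]opprB is_normN.
have := is_norm_le_mx_norm (x - y).
have : basis_norm * `|x - y| <= (basis_norm + 1) * `|x - y| by rewrite ler_wpM2r ?lerDl.
rewrite ltr_norml; lra.
Unshelve. all: by end_near.
Qed.

Lemma is_norm_ge_mx_norm : exists2 m, 0 < m & forall y, m * `|y| <= N y.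
Proof.
pose S := [set y : 'rV[R]_k | `|y| = 1].
have normalize_in_S y : y != 0 -> S (`|y|^-1 *: y) by move=> y0; rewrite /S /= normfZV.
have [[z Sz]|S0] := pselect (S !=set0); last first.
  exists 1 => // y; have [->|y0] := eqVneq y 0; first by rewrite normr0 mulr0 is_norm0.
  by exfalso; apply: S0; exists (`|y|^-1 *: y); apply: normalize_in_S.
have S_compact : compact S.
  apply: bounded_closed_compact; first by exists 1; split => // M M1 y /= ->; apply: ltW.
  rewrite (_ : S = Num.norm @^-1` [set 1]) //.
  by apply: closed_comp; [move=> y _; apply: norm_continuous | apply: closed_eq].
have [c Sc c_min] :=
  compact_EVT_min (ex_intro _ z Sz) S_compact (continuous_subspaceT is_norm_continuous).
have Nc0 : 0 < N c.
  rewrite lt_neqAle is_norm_ge0 andbT eq_sym; apply/eqP => /is_norm_eq0 c0.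
  by move: Sc; rewrite inE /S /= c0 normr0 => /eqP; rewrite eq_sym oner_eq0.
exists (N c) => // y; have [->|y0] := eqVneq y 0; first by rewrite normr0 mulr0 is_norm_ge0.
have := c_min _ (mem_set (normalize_in_S _ y0)).
by rewrite is_normZ ger0_norm ?invr_ge0 // ler_pdivlMl ?normr_gt0 // mulrC.
Qed.

End RowNorm.

Lemma det_abs_le (R : numDomainType) (k : nat) (A : 'M[R]_k) (B : R) :
  0 <= B -> (forall i j, `|A i j| <= B) -> `|\det A| <= k`!%:R * B ^+ k.
Proof.
move=> B0 AB; rewrite (le_trans (ler_norm_sum _ _ _)) //.
rewrite -card_Sn -sum1_card natr_sum mulr_suml; apply: ler_sum => s _.
rewrite normrM normrX normrN normr1 expr1n !mul1r normr_prod.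
rewrite -[in B ^+ k](card_ord k) -prodr_const.
by apply: ler_prod => i _; rewrite normr_ge0 AB.
Qed.

Definition row_replace (R : Type) (k : nat) (i : 'I_k) (y : 'rV[R]_k) (A : 'M[R]_k) :
  'M[R]_k := \matrix_(p, q) if p == i then y 0 q else A p q.

Lemma row_row_replace (R : Type) (k : nat) (i p : 'I_k) y (A : 'M[R]_k) :
  row p (row_replace i y A) = if p == i then y else row p A.
Proof.
by case: eqVneq => [->|/negbTE pi]; apply/rowP => q; rewrite !mxE ?eqxx ?pi.
Qed.

Lemma cramer_coord (R : fieldType) (k : nat) (A : 'M[R]_k) (y : 'rV[R]_k) (i : 'I_k) :
  A \in unitmx -> (y *m invmx A) 0 i = \det (row_replace i y A) / \det A.
Proof.
move=> Au; rewrite /invmx Au -scalemxAr mxE mulrC; congr (_ * _).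
rewrite (expand_det_row _ i) mxE; apply: eq_bigr => j _.
rewrite !mxE eqxx; congr (_ * _); rewrite /cofactor; congr (_ * \det _).
by apply/matrixP => p q; rewrite !mxE eq_sym (negbTE (neq_lift _ _)).
Qed.

Section UnitBallBasis.
Variables (R : realType) (k : nat) (N : 'rV[R]_k -> R).
Hypothesis hN : is_norm N.

Let in_ball (A : 'M[R]_k) := forall i, N (row i A) <= 1.

(* Near-maximality, which avoids a compactness argument, costs the factor 2 in
   [exists_unit_ball_basis]. *)
Lemma exists_half_max_det : exists A, [/\ in_ball A, \det A != 0 &
  forall A', in_ball A' -> `|\det A'| <= 2 * `|\det A|].
Proof.
have [m m0 Nm] := is_norm_ge_mx_norm hN.
pose E := [set `|\det A| | A in in_ball].
have E_ub : ubound E (k`!%:R * m^-1 ^+ k).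
  move=> _ [A A_ball <-]; apply: det_abs_le; first by rewrite invr_ge0 ltW.
  move=> i j; rewrite -(ler_pM2l m0) mulrV ?unitfE ?gt_eqF //.
  rewrite (_ : A i j = row i A 0 j); last by rewrite mxE.
  rewrite (le_trans _ (A_ball i)) // (le_trans _ (Nm _)) //.
  by rewrite ler_pM2l // mx_norm_entry_le.
have b0 : 0 < 1 + basis_norm N by rewrite ltr_pwDl ?basis_norm_ge0.
pose c := (1 + basis_norm N)^-1.
have c0 : 0 < c by rewrite invr_gt0.
have cI_ball : in_ball (c *: 1%:M).
  move=> p; rewrite (_ : row p _ = c *: 'e_p); last first.
    by apply/rowP => j; rewrite !mxE eqxx /= eq_sym.
  rewrite (is_normZ hN) (ger0_norm (ltW c0)) /c ler_pdivrMl // mulr1.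
  rewrite /basis_norm (bigD1 p) //=.
  by rewrite addrCA lerDl addr_ge0 // sumr_ge0 // => j _; rewrite is_norm_ge0.
have E_sup : has_sup E.
  split; last by exists (k`!%:R * m^-1 ^+ k).
  by exists `|\det (c *: 1%:M : 'M[R]_k)|; exists (c *: 1%:M).
have sup_gt0 : 0 < sup E.
  apply: (lt_le_trans _ (sup_upper_bound E_sup (ex_intro2 _ _ _ cI_ball erefl))).
  by rewrite detZ det1 mulr1 normrX ger0_norm ?ltW // exprn_gt0.
have [_ [A A_ball <-] A_half] := sup_adherent (divr_gt0 sup_gt0 (ltr0Sn _ 1)) E_sup.
exists A; split => //.
  by rewrite -normr_gt0 (lt_trans _ A_half) // subr_gt0 gtr_pMr // invf_lt1 ?ltr1n.
move=> A' A'_ball.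
have := sup_upper_bound E_sup (ex_intro2 _ _ _ A'_ball erefl); move: A_half; lra.
Qed.

Lemma exists_unit_ball_basis : exists A : 'M[R]_k, [/\ forall i, N (row i A) <= 1,
  A \in unitmx & forall y, N y <= 1 -> forall i, `|(y *m invmx A) 0 i| <= 2].
Proof.
have [A [A_ball detA0 A_max]] := exists_half_max_det.
have Au : A \in unitmx by rewrite unitmxE unitfE.
exists A; split => // y y_ball i.
rewrite cramer_coord // normrM normfV ler_pdivrMr ?normr_gt0 //.
by apply: A_max => p; rewrite row_row_replace; case: eqP.
Qed.

End UnitBallBasis.

Lemma truncn_minn_close (R : archiRealDomainType) (M : nat) (u u' : R) :
  0 <= u <= M%:R -> 0 <= u' <= M%:R ->
  minn (Num.truncn u) M.-1 = minn (Num.truncn u') M.-1 -> `|u - u'| <= 1.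
Proof.
move=> /andP[u0 uM] /andP[u'0 u'M] same_cell.
have M_le : (M%:R : R) <= M.-1%:R + 1 by rewrite natr1 ler_nat; lia.
have tu : (Num.truncn u)%:R <= u by rewrite truncn_le.
have tu' : (Num.truncn u')%:R <= u' by rewrite truncn_le.
have := truncnS_gt u; have := truncnS_gt u'; rewrite -!natr1 => tu'1 tu1.
rewrite ler_norml; case: (leqP M.-1 (Num.truncn u)) => cu.
- have cu' : (M.-1 <= Num.truncn u')%N by move: same_cell; rewrite (minn_idPr cu); lia.
  move: cu cu'; rewrite -!(ler_nat R) => cu cu'; apply/andP; split; lra.
- have ctu : Num.truncn u' = Num.truncn u.
    by move: same_cell; rewrite (minn_idPl (ltnW cu)); lia.
  by rewrite ctu in tu' tu'1; apply/andP; split; lra.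
Qed.

Lemma cell_subproof (s n : nat) : (minn n (2 ^ s).-1 < 2 ^ s)%N.
Proof. by rewrite (leq_ltn_trans (geq_minr _ _)) // ltn_predL expn_gt0. Qed.

(* Index of the cell containing [t] when [[-2, 2]] is cut into [2 ^ s] cells. *)
Definition cell (R : archiRealDomainType) (s : nat) (t : R) : 'I_(2 ^ s) :=
  Ordinal (cell_subproof s (Num.truncn ((t + 2) * 2 ^+ s / 4))).

Lemma cell_close (R : archiRealFieldType) (s : nat) (t t' : R) :
  `|t| <= 2 -> `|t'| <= 2 -> cell s t = cell s t' -> `|t - t'| <= 4 / 2 ^+ s.
Proof.
have scale_gt0 : 0 < 2 ^+ s / 4 :> R by rewrite divr_gt0 ?exprn_gt0.
have in_range (x : R) : `|x| <= 2 -> 0 <= (x + 2) * (2 ^+ s / 4) <= (2 ^ s)%:R.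
  rewrite ler_norml natrX => /andP[x2 x2'].
  have x2_ge0 : 0 <= x + 2 by lra.
  rewrite mulr_ge0 ?(ltW scale_gt0) //=.
  by rewrite mulrCA ger_pMr ?exprn_gt0 // ler_pdivrMr // mul1r; lra.
move=> t2 t'2 /(congr1 val) /= same.
have := truncn_minn_close (in_range _ t2) (in_range _ t'2).
rewrite !mulrA same => /(_ erefl).
have -> : (t + 2) * 2 ^+ s / 4 - (t' + 2) * 2 ^+ s / 4 = (t - t') * (2 ^+ s / 4) by ring.
by rewrite normrM (ger0_norm (ltW scale_gt0)) -ler_pdivlMr // div1r invf_div.
Qed.

Lemma exists_unit_ball_partition (R : realType) (k : nat) (N : 'rV[R]_k -> R) (s : nat) :
  is_norm N -> exists lab : 'rV[R]_k -> {ffun 'I_k -> 'I_(2 ^ s)},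
  forall y y', N y <= 1 -> N y' <= 1 -> lab y = lab y' -> N (y - y') <= k%:R * (4 / 2 ^+ s).
Proof.
move=> hN; have [A [A_ball Au coord_le2]] := exists_unit_ball_basis hN.
exists (fun y => [ffun i => cell s ((y *m invmx A) 0 i)]) => y y' y1 y'1 same.
have coord_close i : `|((y - y') *m invmx A) 0 i| <= 4 / 2 ^+ s.
  rewrite mulmxBl mxE [in X in _ + X]mxE; apply: cell_close; rewrite ?coord_le2 //.
  by have := congr1 (fun f : {ffun 'I_k -> 'I_(2 ^ s)} => f i) same; rewrite !ffunE.
rewrite -[y - y'](mulmxKV Au) mulmx_sum_row (le_trans (is_norm_sum hN _ _ _)) //.
have -> : k%:R * (4 / 2 ^+ s) = \sum_(i < k) 4 / 2 ^+ s :> R.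
  by rewrite sumr_const card_ord mulr_natl.
apply: ler_sum => i _.
rewrite (is_normZ hN) -[4 / 2 ^+ s]mulr1.
by apply: ler_pM; rewrite ?normr_ge0 ?(is_norm_ge0 hN) ?coord_close ?A_ball.
Qed.

Section EntropyVersusLipschitzWidth.
Variables (R : realType) (X : normedModType R) (K : set X).

Lemma entropy_number_le_cover (m : nat) (I : finType) (c : I -> X) (e : R) :
  0 < e -> (#|I| <= 2 ^ m)%N -> (forall x, K x -> exists i, `|x - c i| <= e) ->
  (entropy_number K m <= e%:E)%E.
Proof.
move=> e0 card_I K_cover; apply: ereal_inf_lbound; exists e => //; split => //.
exists (fun j : 'I_(2 ^ m) => nth 0 (map c (enum I)) j) => x Kx.
have [i xi] := K_cover x Kx.
have i_lt : (index i (enum I) < 2 ^ m)%N.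
  by rewrite (leq_trans _ card_I) // cardT index_mem mem_enum.
exists (Ordinal i_lt) => //=.
by rewrite /cball /= (nth_map i) ?index_mem ?mem_enum // nth_index ?mem_enum.
Qed.

Lemma entropy_number_gt_nonempty (m : nat) (e : R) :
  0 < e -> (e%:E < entropy_number K m)%E -> K !=set0.
Proof.
move=> e0 e_lt; apply/set0P/negP => /eqP K0.
have K_cover x : K x -> exists i : void, `|x - of_void X i| <= e by rewrite K0.
have := entropy_number_le_cover e0 _ K_cover; rewrite card_void => /(_ m isT) e_ge.
by have := lt_le_trans e_lt e_ge; rewrite ltxx.
Qed.

Variable gam : R.

Lemma entropy_number_le_dist_sup (n s k : nat) (N : 'rV[R]_k -> R) (Phi : 'rV[R]_k -> X) :
  K !=set0 -> is_norm N -> (k <= n)%N ->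
  (forall y y', N y <= 1 -> N y' <= 1 -> `|Phi y - Phi y'| <= gam * N (y - y')) ->
  (entropy_number K (n * s) <=
     ereal_sup [set ereal_inf [set (`|f - Phi y|)%:E | y in unit_ball N] | f in K]
     + (n%:R * (4 / 2 ^+ s) * `|gam|)%:E)%E.
Proof.
move=> [f0 Kf0] hN kn Phi_lip; set D := ereal_sup _; set r := _ * `|gam|.
have r0 : 0 <= r by rewrite !mulr_ge0 ?divr_ge0 ?exprn_ge0.
have dist_le_D f : K f -> (ereal_inf [set (`|f - Phi y|)%:E | y in unit_ball N] <= D)%E.
  by move=> Kf; apply: ereal_sup_ubound; exists f.
have D0 : (0 <= D)%E.
  apply: le_trans (dist_le_D _ Kf0).
  by apply/ereal_infP => _ [y _ <-]; rewrite lee_fin normr_ge0.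
have [D_fin|] := boolP (D \is a fin_num); last first.
  by move/fin_numPn => [D_ny|->]; [rewrite D_ny in D0 | rewrite addye ?leey].
rewrite -(fineK D_fin); apply/lee_addgt0Pr => eta eta0; rewrite -!EFinD.
(* One ball of radius [D + r + eta] around [Phi (rep v)] for each cell label [v]. *)
have [lab lab_close] := exists_unit_ball_partition s hN.
pose rep v := xget (0 : 'rV[R]_k) [set y | N y <= 1 /\ lab y = v].
apply: (entropy_number_le_cover (c := Phi \o rep)).
- by rewrite -addrA (le_lt_trans (fine_ge0 D0)) // ltrDl ltr_wpDl.
- by rewrite card_ffun !card_ord -expnM leq_exp2l // mulnC leq_mul2r kn orbT.
move=> f Kf.
have : (ereal_inf [set (`|f - Phi y|)%:E | y in unit_ball N] < (fine D + eta)%:E)%E.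
  by rewrite (le_lt_trans (dist_le_D _ Kf)) // -(fineK D_fin) lte_fin ltrDl.
move=> /ereal_inf_lt [_ [y y1 <-]]; rewrite lte_fin => f_y.
exists (lab y) => /=.
have [rep1 lab_rep] : N (rep (lab y)) <= 1 /\ lab (rep (lab y)) = lab y.
  by apply: (xgetPex 0 (P := [set y0 | N y0 <= 1 /\ lab y0 = lab y])); exists y.
have Nk := lab_close _ _ y1 rep1 (esym lab_rep).
have : `|Phi y - Phi (rep (lab y))| <= r.
  rewrite (le_trans (Phi_lip _ _ y1 rep1)) //.
  rewrite (le_trans (ler_wpM2r (is_norm_ge0 hN _) (ler_norm gam))) // mulrC /r.
  by rewrite ler_wpM2r // (le_trans Nk) // ler_wpM2r ?divr_ge0 ?exprn_ge0 ?ler_nat.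
have := ler_distD (Phi y) f (Phi (rep (lab y))); rewrite distrC; lra.
Qed.

Lemma entropy_number_le_lip_width (n s : nat) : K !=set0 ->
  (entropy_number K (n * s) <= lip_width K gam n + (n%:R * (4 / 2 ^+ s) * `|gam|)%:E)%E.
Proof.
move=> K0; rewrite -leeBlDr //.
apply/ereal_infP => _ [k [N [/andP[_ kn] hN ->]]].
apply/ereal_infP => _ [Phi Phi_lip <-].
by rewrite leeBlDr // entropy_number_le_dist_sup.
Qed.

Lemma lip_width_ge_half_entropy (n s : nat) (v : R) :
  0 < v -> n%:R * (4 / 2 ^+ s) * `|gam| <= v ->
  ((2 * v)%:E < entropy_number K (n * s))%E -> (v%:E <= lip_width K gam n)%E.
Proof.
move=> v0 err_le lt_entropy.
have K0 := entropy_number_gt_nonempty (mulr_gt0 (ltr0Sn _ 1) v0) lt_entropy.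
have := lt_le_trans lt_entropy (entropy_number_le_lip_width n s K0).
have err_le' : ((n%:R * (4 / 2 ^+ s) * `|gam|)%:E <= v%:E)%E by rewrite lee_fin.
move/lt_le_trans => /(_ _ (leeD2l _ err_le')).
by rewrite mulr2n mulrDl mul1r EFinD lteD2rE // => /ltW.
Qed.

End EntropyVersusLipschitzWidth.

Section Log2.
Variable R : realType.
Implicit Types (x y t u : R) (n : nat).

Lemma ln2_gt0 : 0 < ln (2 : R).
Proof. by rewrite ln_gt0 ?ltr1n. Qed.

Lemma log2M x y : 0 < x -> 0 < y -> log2 (x * y) = log2 x + log2 y.
Proof. by move=> x0 y0; rewrite /log2 lnM ?posrE // mulrDl. Qed.

Lemma log2V x : 0 < x -> log2 x^-1 = - log2 x.
Proof. by move=> x0; rewrite /log2 lnV ?posrE // mulNr. Qed.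

Lemma log2_powR x t : log2 (x `^ t) = t * log2 x.
Proof. by rewrite /log2 ln_powR mulrA. Qed.

Lemma log2_2 : log2 (2 : R) = 1.
Proof. by rewrite /log2 divff // gt_eqF // ln2_gt0. Qed.

Lemma log2_powR2 t : log2 (2 `^ t) = t.
Proof. by rewrite log2_powR log2_2 mulr1. Qed.

Lemma log2_exp2 n : log2 (2 ^+ n : R) = n%:R.
Proof. by rewrite /log2 lnXn // mulrnAl divff // gt_eqF // ln2_gt0. Qed.

Lemma ler_log2 : {in Num.pos &, {mono @log2 R : x y / x <= y}}.
Proof. by move=> x y x0 y0; rewrite /log2 ler_pM2r ?invr_gt0 ?ln2_gt0 // ler_ln. Qed.

Lemma le_log2 x y : 0 < x -> x <= y -> log2 x <= log2 y.
Proof. by move=> x0 xy; rewrite ler_log2 ?posrE // (lt_le_trans x0). Qed.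

Lemma log2_ge0 x : 1 <= x -> 0 <= log2 x.
Proof. by move=> x1; apply: divr_ge0; [exact: ln_ge0 | exact: ltW ln2_gt0]. Qed.

Lemma log2_ge1 x : 2 <= x -> 1 <= log2 x.
Proof.
move=> x2; rewrite ler_pdivlMr ?ln2_gt0 // mul1r ler_ln ?posrE //.
by rewrite (lt_le_trans _ x2).
Qed.

Lemma log2_lt x : 0 < x -> log2 x < x / ln 2.
Proof. by move=> x0; rewrite ltr_pM2r ?invr_gt0 ?ln2_gt0 // ln_sublinear. Qed.

Lemma log2_le_nat n : (1 <= n)%N -> log2 (n%:R : R) <= n%:R.
Proof.
move=> n1; rewrite -[leRHS]log2_exp2 ler_log2 ?posrE ?exprn_gt0 ?ltr0n //.
by rewrite -natrX ler_nat ltnW // ltn_expl.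
Qed.

Lemma log2_mul_powR_div a x y t u : 0 < a -> 0 < x -> 0 < y ->
  log2 (a * x `^ t / y `^ u) = log2 a + t * log2 x - u * log2 y.
Proof.
move=> a0 x0 y0; have [xt0 yu0] := (powR_gt0 t x0, powR_gt0 u y0).
by rewrite log2M ?mulr_gt0 ?invr_gt0 // log2M // log2V // !log2_powR.
Qed.

End Log2.

Lemma exists_nat_gt (R : archiRealDomainType) (x : R) : exists n : nat, x < n%:R.
Proof. by exists (Num.bound `|x|); rewrite (le_lt_trans (ler_norm x)) // archi_boundP. Qed.

Lemma exists_nat_between (R : archiRealDomainType) (x : R) :
  0 <= x -> exists n : nat, x <= n%:R <= x + 1.
Proof.
move=> x0; exists (Num.truncn x).+1; rewrite ltW ?truncnS_gt //=.
by rewrite -natr1 lerD2r truncn_le.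
Qed.

Lemma exists_nat_ge_log2 (R : realType) (a b Q : R) : 0 < b -> 0 <= Q ->
  exists A : nat, a + Q * log2 (b + A%:R) <= A%:R.
Proof.
move=> b0 Q0; have l2 := @ln2_gt0 R.
pose M := 2 * (Q + 1) / ln 2.
have M0 : 0 < M by rewrite divr_gt0 // mulr_gt0 // ltr_wpDl.
(* [M] is chosen so that [Q / (M ln 2) <= 1 / 2]. *)
have Qlog2_le y : 0 < y -> Q * log2 y <= y / 2 + Q * log2 M.
  move=> y0; have yM0 : 0 < y / M by rewrite divr_gt0.
  rewrite -[y in log2 y](divfK (lt0r_neq0 M0)) log2M // mulrDr lerD2r.
  rewrite (le_trans (ler_wpM2l Q0 (ltW (log2_lt yM0)))) //.
  have Q1 : 0 < Q + 1 by rewrite ltr_wpDl.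
  have -> : Q * (y / M / ln 2) = y / 2 - y / (2 * (Q + 1)).
    by rewrite /M; field; rewrite !lt0r_neq0.
  by rewrite lerBlDr lerDl divr_ge0 ?ltW ?mulr_gt0.
have [A A_gt] := exists_nat_gt (2 * a + b + 2 * (Q * log2 M)).
exists A; have := Qlog2_le (b + A%:R) (ltr_wpDr (ler0n _ _) b0); lra.
Qed.

Lemma lip_width_ge_of_log2 (R : realType) (X : normedModType R) (K : set X) (gam : R)
    (n s : nat) (v e : R) :
  (1 <= n)%N -> 0 < v -> 0 < e ->
  2 + log2 (n%:R : R) + log2 (`|gam| + 1) - log2 v <= s%:R ->
  1 + log2 v <= log2 e ->
  (e%:E < entropy_number K (n * s))%E -> (v%:E <= lip_width K gam n)%E.
Proof.
move=> n1 v0 e0 s_ge e_ge e_lt.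
have n0 : (0 : R) < n%:R by rewrite ltr0n.
have g0 : 0 < `|gam| + 1 by rewrite ltr_wpDl.
have p2s : (0 : R) < 2 ^+ s by rewrite exprn_gt0.
apply: (lip_width_ge_half_entropy (s := s)) => //.
  rewrite (@le_trans _ _ (n%:R * (4 / 2 ^+ s) * (`|gam| + 1))) //.
    by rewrite ler_pM2l ?mulr_gt0 ?divr_gt0 // lerDl.
  rewrite -ler_log2 ?posrE ?mulr_gt0 ?divr_gt0 // !log2M ?divr_gt0 ?mulr_gt0 //.
  have four : (4 : R) = 2 ^+ 2 by rewrite expr2 -natrM.
  by rewrite log2V // four !log2_exp2; lra.
apply: (le_lt_trans _ e_lt).
by rewrite lee_fin -ler_log2 ?posrE ?mulr_gt0 // log2M // log2_2.
Qed.

Lemma mulr_log2_ge (R : realType) (t x y D : R) : 0 < x -> x <= y -> y <= D * x ->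
  t * log2 x - `|t| * log2 D <= t * log2 y.
Proof.
move=> x0 xy yD; have y0 := lt_le_trans x0 xy.
have D1 : 1 <= D by rewrite -(ler_pM2r x0) mul1r (le_trans xy).
have D0 : 0 < D := lt_le_trans ltr01 D1.
have log2_xy : log2 x <= log2 y by rewrite le_log2.
have log2_yD : log2 y <= log2 D + log2 x by rewrite -log2M // le_log2.
have [t0|t0] := leP 0 t.
  rewrite ger0_norm // lerBlDr (le_trans (ler_wpM2l t0 log2_xy)) //.
  by rewrite lerDl mulr_ge0 ?log2_ge0.
rewrite ltr0_norm // mulNr opprK -mulrDr mulrC addrC.
by rewrite [leRHS]mulrC ler_wnM2r // ltW.
Qed.

Section PolylogDecay.
Variables (R : realType) (X : normedModType R) (K : set X).
Variables (c1 alpha beta gam : R) (p A : nat).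
Hypotheses (c1_gt0 : 0 < c1) (alpha_ge0 : 0 <= alpha).
(* We take [s = p l + A] with [l] about [log2 n]: [2 ^ s >= n ^ p] beats the loss
   [n ^ (1 + alpha + |beta - alpha|)], and [2 ^ A] absorbs [1 / C], which itself
   depends on [A] through [D >= log2 (n s) / log2 n]. *)
Hypothesis p_gt : 1 + alpha + `|beta - alpha| < p%:R.
Hypothesis A_ge : 3 + log2 (`|gam| + 1) - log2 c1
  + (alpha + `|beta|) * log2 (2 * p%:R + 1 + A%:R) <= A%:R.

Local Notation D := (2 * p%:R + 1 + A%:R : R).
Local Notation C := (c1 * D `^ (- (alpha + `|beta|)) / 2).

Let p_ge1 : 1 <= p%:R :> R.
Proof. by apply: ltW; rewrite (le_lt_trans _ p_gt) // -addrA lerDl addr_ge0. Qed.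

Let D_gt0 : 0 < D.
Proof. by rewrite ltr_wpDr ?ler0n // ltr_wpDl ?mulr_ge0 ?ler0n. Qed.

Let C_gt0 : 0 < C.
Proof. by rewrite divr_gt0 ?mulr_gt0 ?powR_gt0. Qed.

Let log2_C : log2 C = log2 c1 - (alpha + `|beta|) * log2 D - 1.
Proof.
have D0 := D_gt0.
rewrite log2M ?mulr_gt0 ?powR_gt0 ?invr_gt0 // log2M ?powR_gt0 // log2V //.
by rewrite log2_powR log2_2 mulNr.
Qed.

Section FixedN.
Variables (n l : nat).
Local Notation L := (log2 (n%:R : R)).
Hypotheses (n2 : (2 <= n)%N) (l_ge : L <= l%:R) (l_le : l%:R <= L + 1).
Local Notation s := (p * l + A)%N.

Let n0 : 0 < n%:R :> R. Proof. by rewrite ltr0n ltnW. Qed.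
Let L1 : 1 <= L. Proof. by rewrite log2_ge1 ?ler_nat. Qed.
Let L0 : 0 < L. Proof. exact: lt_le_trans ltr01 L1. Qed.
Let L_le_n : L <= n%:R. Proof. by rewrite log2_le_nat // ltnW. Qed.

Lemma polylog_err_log2 :
  2 + L + log2 (`|gam| + 1) - log2 (C * L `^ (beta - alpha) / n%:R `^ alpha) <= s%:R.
Proof.
rewrite (log2_mul_powR_div _ _ C_gt0 L0 n0) log2_C.
have := @mulr_log2_ge _ (beta - alpha) 1 L n%:R ltr01 L1.
rewrite mulr1 => /(_ L_le_n).
rewrite (_ : log2 1 = 0) ?mulr0 ?sub0r; last by rewrite /log2 ln1 mul0r.
have PL : (1 + alpha + `|beta - alpha|) * L <= p%:R * l%:R.
  by rewrite ler_pM ?addr_ge0 // ?ltW // (le_trans ltr01).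
have := A_ge; rewrite natrD natrM; lra.
Qed.

Lemma polylog_entropy_log2 :
  1 + log2 (C * L `^ (beta - alpha) / n%:R `^ alpha) <=
  log2 (c1 * log2 ((n * s)%:R : R) `^ beta / (n * s)%:R `^ alpha).
Proof.
have sDL : (s%:R : R) <= (D - 1) * L.
  have pl : p%:R * l%:R <= p%:R * (2 * L).
    by apply: ler_wpM2l; [exact: ler0n | move: l_le L1; lra].
  have AL : (A%:R : R) <= A%:R * L by rewrite ler_peMr.
  have -> : (D - 1) * L = p%:R * (2 * L) + A%:R * L by ring.
  by rewrite natrD natrM; lra.
have l1 : (1 <= l)%N by rewrite -(ler1n R); move: l_ge L1; lra.
have s0 : (0 : R) < s%:R by rewrite ltr0n addn_gt0 muln_gt0 l1 -(ler1n R) p_ge1.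
have log2s_ge0 : 0 <= log2 (s%:R : R) by rewrite log2_ge0 // ler1n -(ltr0n R).
have log2s_le : log2 (s%:R : R) <= s%:R by rewrite log2_le_nat // -(ltr0n R).
have log2s_D : log2 (s%:R : R) <= log2 D + log2 L.
  have sDL' : (s%:R : R) <= D * L by move: L0; lra.
  by rewrite -log2M // le_log2.
have log2_ns : log2 ((n * s)%:R : R) = L + log2 s%:R by rewrite natrM log2M.
have alpha_log : alpha * log2 (s%:R : R) <= alpha * (log2 D + log2 L).
  exact: ler_wpM2l.
have ns0 : (0 : R) < (n * s)%:R by rewrite natrM mulr_gt0.
have L_Lns : L <= log2 ((n * s)%:R) by rewrite log2_ns lerDl.
have Lns_DL : log2 ((n * s)%:R) <= D * L by rewrite log2_ns; move: L1; lra.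
have := mulr_log2_ge beta L0 L_Lns Lns_DL.
rewrite (log2_mul_powR_div _ _ C_gt0 L0 n0) log2_C.
rewrite (log2_mul_powR_div _ _ c1_gt0 (lt_le_trans L0 L_Lns) ns0) log2_ns.
lra.
Qed.

End FixedN.

Lemma lip_width_ge_polylog_const :
  (forall n : nat, (2 <= n)%N ->
     ((c1 * (log2 (n%:R : R) `^ beta) / (n%:R `^ alpha))%:E < entropy_number K n)%E) ->
  forall n : nat, (2 <= n)%N ->
    ((C * (log2 (n%:R : R) `^ (beta - alpha)) / (n%:R `^ alpha))%:E <= lip_width K gam n)%E.
Proof.
move=> entropy_gt n n2.
have L1 : 1 <= log2 (n%:R : R) by rewrite log2_ge1 ?ler_nat.
have [l /andP[l_ge l_le]] := exists_nat_between (le_trans ler01 L1).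
have l1 : (1 <= l)%N by rewrite -(ler1n R) (le_trans L1 l_ge).
have ns2 : (2 <= n * (p * l + A))%N.
  by rewrite (leq_trans n2) // leq_pmulr // addn_gt0 muln_gt0 l1 -(ler1n R) p_ge1.
have n0 : (0 : R) < n%:R by rewrite ltr0n ltnW.
have ns0 : (0 : R) < (n * (p * l + A))%:R by rewrite ltr0n ltnW.
have Lns0 : 0 < log2 ((n * (p * l + A))%:R : R).
  by rewrite (lt_le_trans ltr01) // log2_ge1 // ler_nat.
apply: (lip_width_ge_of_log2 _ _ _ (polylog_err_log2 n2 l_ge)
  (polylog_entropy_log2 n2 l_ge l_le) (entropy_gt _ ns2)).
- exact: ltnW.
- exact: divr_gt0 (mulr_gt0 C_gt0 (powR_gt0 _ (lt_le_trans ltr01 L1))) (powR_gt0 _ n0).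
- exact: divr_gt0 (mulr_gt0 c1_gt0 (powR_gt0 _ Lns0)) (powR_gt0 _ ns0).
Qed.

End PolylogDecay.

Lemma lip_width_ge_polylog (R : realType) (X : normedModType R) (K : set X)
    (c1 alpha beta gam : R) :
  0 < c1 -> 0 <= alpha ->
  (forall n : nat, (2 <= n)%N ->
     ((c1 * (log2 (n%:R : R) `^ beta) / (n%:R `^ alpha))%:E < entropy_number K n)%E) ->
  exists C : R, 0 < C /\ forall n : nat, (2 <= n)%N ->
    ((C * (log2 (n%:R : R) `^ (beta - alpha)) / (n%:R `^ alpha))%:E <= lip_width K gam n)%E.
Proof.
move=> c1_gt0 alpha_ge0 entropy_gt.
have [p p_gt] := exists_nat_gt (1 + alpha + `|beta - alpha|).
have b0 : 0 < 2 * p%:R + 1 :> R := ltr_wpDl (mulr_ge0 (ler0n R 2) (ler0n R p)) ltr01.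
have [A A_ge] := exists_nat_ge_log2 (3 + log2 (`|gam| + 1) - log2 c1)
  b0 (addr_ge0 alpha_ge0 (normr_ge0 beta)).
eexists; split; last exact: lip_width_ge_polylog_const c1_gt0 alpha_ge0 p_gt A_ge entropy_gt.
by rewrite divr_gt0 // mulr_gt0 // powR_gt0 // (ltr_wpDr (ler0n R A) b0).
Qed.

Section StretchedExpDecay.
Variables (R : realType) (X : normedModType R) (K : set X) (c1 c alpha gam : R).
Hypotheses (c1_gt0 : 0 < c1) (c_gt0 : 0 < c).
Hypotheses (alpha_gt0 : 0 < alpha) (alpha_lt1 : alpha < 1).
(* We take [s] about [B n ^ r]; as [alpha (1 + r) = r], this gives
   [(n s) ^ alpha <= (B + 1) ^ alpha n ^ r], whence [c2].  [B] is large enough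
   for [c2 <= (B + 1) / 2] and for the error term to stay below the target. *)

Local Notation r := (alpha / (1 - alpha)).
Local Notation k0 := (3 + log2 (`|gam| + 1) - log2 c1).
Local Notation B := (1 + 2 * (`|k0| + (r * ln 2)^-1) + (2 * c) `^ (1 - alpha)^-1).
Local Notation c2 := (c * (B + 1) `^ alpha).

Let r_gt0 : 0 < r. Proof. by rewrite divr_gt0 // subr_gt0. Qed.

Let slack_ge0 : 0 <= `|k0| + (r * ln 2)^-1.
Proof. by rewrite addr_ge0 // invr_ge0 mulr_ge0 ?ltW ?ln2_gt0. Qed.

Let B_ge1 : 1 <= B.
Proof. by have := slack_ge0; have := powR_ge0 (2 * c) (1 - alpha)^-1; lra. Qed.

Let c2_le : c2 <= (B + 1) / 2.
Proof.
have a1 : 0 < 1 - alpha by rewrite subr_gt0.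
have B1 : 0 < B + 1 := ltr_wpDl (le_trans ler01 B_ge1) ltr01.
have : log2 ((2 * c) `^ (1 - alpha)^-1) <= log2 (B + 1).
  by rewrite le_log2 ?powR_gt0 ?mulr_gt0 //; have := slack_ge0; lra.
rewrite log2_powR log2M // log2_2 => /(ler_wpM2l (ltW a1)).
rewrite mulrA mulfV ?gt_eqF // mul1r => h.
rewrite -ler_log2 ?posrE ?divr_gt0 ?mulr_gt0 ?powR_gt0 //.
rewrite log2M ?powR_gt0 // log2M ?invr_gt0 // log2V // log2_powR log2_2; lra.
Qed.

Let powR_r_ge1 (n : nat) : (1 <= n)%N -> 1 <= n%:R `^ r.
Proof.
move=> n1; have := @ge0_ler_powR R r (ltW r_gt0) 1 n%:R.
by rewrite powR1 !nnegrE ler01 ler0n ler1n; apply.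
Qed.

Section FixedN.
Variables (n s : nat).
Local Notation x := (n%:R `^ r).
Hypotheses (n1 : (1 <= n)%N) (s_ge : B * x <= s%:R) (s_le : s%:R <= B * x + 1).

Let n0 : 0 < n%:R :> R. Proof. by rewrite ltr0n. Qed.
Let x_ge1 : 1 <= x := powR_r_ge1 n1.

Lemma stretched_err_log2 :
  2 + log2 (n%:R : R) + log2 (`|gam| + 1) - log2 (c1 / 2 * 2 `^ (- (c2 * x))) <= s%:R.
Proof.
rewrite log2M ?divr_gt0 ?powR_gt0 // log2M // log2V // log2_2 log2_powR2.
have log2n_le : log2 (n%:R : R) <= (r * ln 2)^-1 * x.
  have := log2_lt (lt_le_trans ltr01 x_ge1); rewrite log2_powR => h.
  have -> : (r * ln 2)^-1 * x = x / ln 2 / r.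
    by rewrite invfM; ring.
  by rewrite ler_pdivlMr // mulrC ltW.
have : k0 <= `|k0| * x by rewrite (le_trans (ler_norm _)) // ler_peMr.
have := ler_wpM2r (le_trans ler01 x_ge1) c2_le.
have := mulr_ge0 (powR_ge0 (2 * c) (1 - alpha)^-1) (le_trans ler01 x_ge1).
have := s_ge; lra.
Qed.

Lemma stretched_entropy_log2 :
  1 + log2 (c1 / 2 * 2 `^ (- (c2 * x))) <= log2 (c1 * 2 `^ (- (c * (n * s)%:R `^ alpha))).
Proof.
rewrite log2M ?divr_gt0 ?powR_gt0 // log2M // log2V // log2_2 log2_powR2.
rewrite log2M ?powR_gt0 // log2_powR2.
suff /(ler_wpM2l (ltW c_gt0)) : (n * s)%:R `^ alpha <= (B + 1) `^ alpha * x.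
  have -> : 1 + (log2 c1 - 1 - c2 * x) = log2 c1 - c2 * x by ring.
  by rewrite lerD2l lerN2 mulrA.
have x0 : 0 <= x := le_trans ler01 x_ge1.
have B0 : 0 <= B + 1 by rewrite addr_ge0 // (le_trans ler01 B_ge1).
have ns_le : (n * s)%:R <= n%:R * ((B + 1) * x).
  by rewrite natrM ler_wpM2l // (le_trans s_le) // [(B + 1) * x]mulrDl mul1r lerD2l.
rewrite (le_trans (ge0_ler_powR (ltW alpha_gt0) _ _ ns_le)) ?nnegrE ?mulr_ge0 //.
rewrite (powRM alpha (ler0n R n) (mulr_ge0 B0 x0)) (powRM alpha B0 x0) -powRrM.
rewrite mulrCA -powRD; last by rewrite pnatr_eq0 -lt0n n1 implybT.
have -> : alpha + r * alpha = r by field; rewrite subr_eq0 gt_eqF.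
by rewrite mulrC.
Qed.

End FixedN.

Lemma lip_width_ge_stretched_exp :
  (forall n : nat, (1 <= n)%N ->
     ((c1 * (2 `^ (- (c * (n%:R `^ alpha)))))%:E < entropy_number K n)%E) ->
  exists C c2 : R, [/\ 0 < C, 0 < c2 & forall n : nat, (1 <= n)%N ->
    ((C * (2 `^ (- (c2 * (n%:R `^ (alpha / (1 - alpha)))))))%:E <= lip_width K gam n)%E].
Proof.
have B0 : 0 < B := lt_le_trans ltr01 B_ge1.
move=> entropy_gt; exists (c1 / 2), c2; split => [||n n1]; first exact: divr_gt0.
  by rewrite mulr_gt0 ?powR_gt0 // ltr_wpDl ?ltW.
have x0 : 0 < n%:R `^ r := lt_le_trans ltr01 (powR_r_ge1 n1).
have [s /andP[s_ge s_le]] := exists_nat_between (mulr_ge0 (ltW B0) (ltW x0)).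
have ns1 : (1 <= n * s)%N.
  by rewrite muln_gt0 n1 -(ltr0n R) (lt_le_trans _ s_ge) // mulr_gt0.
apply: (lip_width_ge_of_log2 _ _ _ (stretched_err_log2 n1 s_ge)
  (stretched_entropy_log2 n1 s_le) (entropy_gt _ ns1)) => //.
  by rewrite mulr_gt0 ?divr_gt0 ?powR_gt0.
by rewrite mulr_gt0 ?powR_gt0.
Qed.

End StretchedExpDecay.

Unset Implicit Arguments.

Theorem theorem4p7 (R : realType) (X : completeNormedModType R) (K : set X)
  (hK : compact K) :
  (* (i) *)
  (forall (c1 alpha beta : R), 0 < c1 -> 0 < alpha ->
     (forall n : nat, (2 <= n)%N ->
        ((c1 * (log2 (n%:R : R) `^ beta) / (n%:R `^ alpha))%:E
          < entropy_number K n)%E) ->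
     forall gamma : R, 0 < gamma -> exists C : R, 0 < C /\
       forall n : nat, (2 <= n)%N ->
         ((C * (log2 (n%:R : R) `^ (beta - alpha)) / (n%:R `^ alpha))%:E
           <= lip_width K gamma n)%E) /\
  (* (ii) *)
  (forall (c1 alpha : R), 0 < c1 -> 0 < alpha ->
     (forall n : nat, (2 <= n)%N ->
        ((c1 * (log2 (n%:R : R) `^ (- alpha)))%:E < entropy_number K n)%E) ->
     forall gamma : R, 0 < gamma -> exists C : R, 0 < C /\
       forall n : nat, (2 <= n)%N ->
         ((C * (log2 (n%:R : R) `^ (- alpha)))%:E <= lip_width K gamma n)%E) /\
  (* (iii) *)
  (forall (c1 c alpha : R), 0 < c1 -> 0 < c -> 0 < alpha -> alpha < 1 ->
     (forall n : nat, (1 <= n)%N ->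
        ((c1 * (2 `^ (- (c * (n%:R `^ alpha)))))%:E < entropy_number K n)%E) ->
     forall gamma : R, (2%:E * cheb_rad K <= gamma%:E)%E ->
       exists C c2 : R, [/\ 0 < C, 0 < c2 &
         forall n : nat, (1 <= n)%N ->
           ((C * (2 `^ (- (c2 * (n%:R `^ (alpha / (1 - alpha)))))))%:E
             <= lip_width K gamma n)%E]).
Proof.
split; [|split].
- move=> c1 alpha beta c1_gt0 alpha_gt0 entropy_gt gamma _.
  exact: lip_width_ge_polylog c1_gt0 (ltW alpha_gt0) entropy_gt.
- move=> c1 alpha c1_gt0 _ entropy_gt gamma _.
  have [|C [C_gt0 lip_ge]] :=
    @lip_width_ge_polylog _ _ K c1 0 (- alpha) gamma c1_gt0 (lexx 0).
    by move=> n n2; rewrite powRr0 divr1; apply: entropy_gt.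
  by exists C; split => // n n2; have := lip_ge n n2; rewrite subr0 powRr0 divr1.
- move=> c1 c alpha c1_gt0 c_gt0 alpha_gt0 alpha_lt1 entropy_gt gamma _.
  exact: lip_width_ge_stretched_exp c1_gt0 c_gt0 alpha_gt0 alpha_lt1 entropy_gt.
Qed.
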